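(* Let $\rho$ be a $d$-periodic rank function on a triangulated category $\mathcal{C}$, and for each object $X$ put $\rho(X):=\rho(\mathrm{id}_X)\in\mathbb{R}_{\geq0}(d)$. Then: $\rho(X\oplus Y)=\rho(X)+\rho(Y)$ for all objects $X,Y$; $\rho(\Sigma X)=q\rho(X)$ for every object $X$; and for every exact triangle $X\to Y\to Z\rightsquigarrow$ we have $\rho(X)-\rho(Y)+\rho(Z)=(q+1)\phi$ for some $\phi\in\mathbb{R}_{\geq0}(d)$, namely one can take $\phi=\rho(f)$ where $f:\Sigma^{-1}Z\to X$ is the connecting morphism of the triangle. Moreover, if $\rho$ is integral (i.e. $\rho(f)\in\mathbb{Z}_{\geq0}(d)$ for all morphisms $f$), then $\rho(X)\in\mathbb{Z}_{\geq0}(d)$ for all objects $X$.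
   Context: For $d\in\{1,2,\ldots\}\cup\{\infty\}$ let $\mathbb{R}(d)=\mathbb{R}[q,q^{-1}]$ if $d=\infty$ and $\mathbb{R}[q]/(q^d-1)$ if $d<\infty$; $\mathbb{R}_{\geq0}(d)$ (resp. $\mathbb{Z}_{\geq0}(d)$) is the set of elements represented by (Laurent) polynomials with nonnegative real (resp. nonnegative integer) coefficients; $\phi\geq\psi$ means $\phi-\psi\in\mathbb{R}_{\geq0}(d)$. A $d$-periodic rank function on $\mathcal{C}$ (translation $\Sigma$) assigns to each morphism $f$ an element $\rho(f)\in\mathbb{R}_{\geq0}(d)$ such that: $\rho(\Sigma f)=q\rho(f)$; $\rho(f\oplus g)=\rho(f)+\rho(g)$; $\rho(f)+\rho(g)=\rho(\mathrm{id}_Y)$ for each exact triangle $X\xrightarrow{f}Y\xrightarrow{g}Z\rightsquigarrow$; $\rho\begin{pmatrix} f&h\\0&g\end{pmatrix}\geq\rho(f)+\rho(g)$ for $f:X\to Y$, $g:Z\to W$, $h:Z\to Y$; and $\rho(gf)\leq\rho(f)$, $\rho(gf)\leq\rho(g)$ whenever $gf$ is defined. *)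

From HB Require Import structures.
From mathcomp Require Import all_boot all_order all_algebra.
From mathcomp Require Import Rstruct.
Import Order.TTheory GRing.Theory Num.Theory.
Local Open Scope ring_scope.

Record preadd := PreAdd {
  obj : Type;
  Hm : obj -> obj -> zmodType;
  cmp : forall X Y Z : obj, Hm Y Z -> Hm X Y -> Hm X Z;
  idm : forall X : obj, Hm X X;
  compA : forall X Y Z W (h : Hm Z W) (g : Hm Y Z) (f : Hm X Y),
      cmp X Z W h (cmp X Y Z g f) = cmp X Y W (cmp Y Z W h g) f;
  comp1m : forall X Y (f : Hm X Y), cmp X Y Y (idm Y) f = f;
  compm1 : forall X Y (f : Hm X Y), cmp X X Y f (idm X) = f;
  compDl : forall X Y Z (g g' : Hm Y Z) (f : Hm X Y),
      cmp X Y Z (g + g') f = cmp X Y Z g f + cmp X Y Z g' f;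
  compDr : forall X Y Z (g : Hm Y Z) (f f' : Hm X Y),
      cmp X Y Z g (f + f') = cmp X Y Z g f + cmp X Y Z g f'
}.
Arguments Hm {_} _ _.
Arguments cmp {_ _ _ _} _ _.
Arguments idm {_} _.

Definition is_iso (C : preadd) (X Y : obj C) (f : Hm X Y) : Prop :=
  exists g : Hm Y X, cmp g f = idm X /\ cmp f g = idm Y.
Arguments is_iso {C X Y}.

Record additive := Additive {
  pre :> preadd;
  zobj : obj pre;
  zobj_initial : forall X (f : Hm zobj X), f = 0;
  zobj_final : forall X (f : Hm X zobj), f = 0;
  dsum : obj pre -> obj pre -> obj pre;
  bs_inl : forall X Y, Hm X (dsum X Y);
  bs_inr : forall X Y, Hm Y (dsum X Y);
  bs_prl : forall X Y, Hm (dsum X Y) X;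
  bs_prr : forall X Y, Hm (dsum X Y) Y;
  prl_inl : forall X Y, cmp (bs_prl X Y) (bs_inl X Y) = idm X;
  prr_inr : forall X Y, cmp (bs_prr X Y) (bs_inr X Y) = idm Y;
  prl_inr : forall X Y, cmp (bs_prl X Y) (bs_inr X Y) = 0;
  prr_inl : forall X Y, cmp (bs_prr X Y) (bs_inl X Y) = 0;
  inl_prl_inr_prr : forall X Y,
      cmp (bs_inl X Y) (bs_prl X Y) + cmp (bs_inr X Y) (bs_prr X Y) = idm (dsum X Y)
}.
Arguments zobj {_}.
Arguments dsum {_} _ _.
Arguments bs_inl {_ _ _}.
Arguments bs_inr {_ _ _}.
Arguments bs_prl {_ _ _}.
Arguments bs_prr {_ _ _}.

Definition dsum_mor (C : additive) (X Y Z W : obj C)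
  (f : Hm X Y) (g : Hm Z W) : Hm (dsum X Z) (dsum Y W) :=
  cmp (cmp bs_inl f) bs_prl + cmp (cmp bs_inr g) bs_prr.
Arguments dsum_mor {C X Y Z W}.

(* Upper triangular block morphism  [[f, h], [0, g]] : X (+) Z -> Y (+) W. *)
Definition block_mor (C : additive) (X Y Z W : obj C)
  (f : Hm X Y) (g : Hm Z W) (h : Hm Z Y) : Hm (dsum X Z) (dsum Y W) :=
  cmp (cmp bs_inl f) bs_prl + cmp (cmp bs_inl h) bs_prr + cmp (cmp bs_inr g) bs_prr.
Arguments block_mor {C X Y Z W}.

Record triang := Triang {
  add :> additive;
  Sig : obj add -> obj add;
  Sigm : forall X Y, Hm X Y -> Hm (Sig X) (Sig Y);
  Sigm_id : forall X, Sigm X X (idm X) = idm (Sig X);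
  Sigm_comp : forall X Y Z (g : Hm Y Z) (f : Hm X Y),
      Sigm X Z (cmp g f) = cmp (Sigm Y Z g) (Sigm X Y f);
  Sigm_add : forall X Y (f f' : Hm X Y),
      Sigm X Y (f + f') = Sigm X Y f + Sigm X Y f';
  Sig_full : forall X Y (g : Hm (Sig X) (Sig Y)), exists f, Sigm X Y f = g;
  Sig_faithful : forall X Y (f f' : Hm X Y), Sigm X Y f = Sigm X Y f' -> f = f';
  Sig_esurj : forall Z, exists W (u : Hm (Sig W) Z), is_iso u;
  exact_tri : forall X Y Z, Hm X Y -> Hm Y Z -> Hm Z (Sig X) -> Prop;
  exact_iso : forall X Y Z X' Y' Z' (f : Hm X Y) (g : Hm Y Z) (h : Hm Z (Sig X))
      (f' : Hm X' Y') (g' : Hm Y' Z') (h' : Hm Z' (Sig X'))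
      (a : Hm X X') (b : Hm Y Y') (c : Hm Z Z'),
      exact_tri X Y Z f g h -> is_iso a -> is_iso b -> is_iso c ->
      cmp b f = cmp f' a -> cmp c g = cmp g' b ->
      cmp (Sigm X X' a) h = cmp h' c ->
      exact_tri X' Y' Z' f' g' h';
  exact_id : forall X, exact_tri X X zobj (idm X) 0 0;
  exact_ext : forall X Y (f : Hm X Y), exists Z (g : Hm Y Z) (h : Hm Z (Sig X)),
      exact_tri X Y Z f g h;
  exact_rot : forall X Y Z (f : Hm X Y) (g : Hm Y Z) (h : Hm Z (Sig X)),
      exact_tri X Y Z f g h <-> exact_tri Y Z (Sig X) g h (- Sigm X Y f);
  exact_mor : forall X Y Z X' Y' Z' (f : Hm X Y) (g : Hm Y Z) (h : Hm Z (Sig X))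
      (f' : Hm X' Y') (g' : Hm Y' Z') (h' : Hm Z' (Sig X'))
      (a : Hm X X') (b : Hm Y Y'),
      exact_tri X Y Z f g h -> exact_tri X' Y' Z' f' g' h' -> cmp b f = cmp f' a ->
      exists c : Hm Z Z', cmp c g = cmp g' b /\ cmp (Sigm X X' a) h = cmp h' c;
  exact_oct : forall X Y Z Z' X' Y' (u : Hm X Y) (v : Hm Y Z)
      (j : Hm Y Z') (k : Hm Z' (Sig X))
      (l : Hm Z X') (i : Hm X' (Sig Y))
      (m : Hm Z Y') (n : Hm Y' (Sig X)),
      exact_tri X Y Z' u j k -> exact_tri Y Z X' v l i -> exact_tri X Z Y' (cmp v u) m n ->
      exists (f : Hm Z' Y') (g : Hm Y' X'),
        exact_tri Z' Y' X' f g (cmp (Sigm Y Z' j) i) /\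
        cmp f j = cmp m v /\ cmp n f = k /\ cmp g m = l /\
        cmp i g = cmp (Sigm X Y u) n
}.
Arguments Sig {_} _.
Arguments Sigm {_ _ _} _.
Arguments exact_tri {_ _ _ _} _ _ _.

Inductive period := DFin of nat | DInf.

Definition valid_period (d : period) : Prop :=
  match d with DFin n => (0 < n)%N | DInf => True end.

(* An element of R(d) is represented by its coefficient function a : int -> R:
   for d = ∞ the element  Σ_n a(n) q^n  of R[q,q^-1] (a finitely supported);
   for d < ∞ the class in R[q]/(q^d - 1), where a(n) is the coefficient of q^(n mod d)
   (a is d-periodic).  With this representation an element lies in R_{>=0}(d)
   (resp. Z_{>=0}(d)) iff all coefficients are >= 0 (resp. nonnegative integers). *)
Definition Rd := int -> Rdefinitions.R.

Definition in_Rd (d : period) (a : Rd) : Prop :=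
  match d with
  | DInf => exists N : nat, forall n : int, (N%:Z < `|n|)%R -> a n = 0
  | DFin k => forall n : int, a (n + k%:Z) = a n
  end.

Definition Rd_nonneg (d : period) (a : Rd) : Prop :=
  in_Rd d a /\ forall n, 0 <= a n.

Definition Zd_nonneg (d : period) (a : Rd) : Prop :=
  in_Rd d a /\ forall n, exists k : nat, a n = k%:R.

Definition qmul (a : Rd) : Rd := fun n => a (n - 1).
Definition Rd_add (a b : Rd) : Rd := fun n => a n + b n.
Definition Rd_sub (a b : Rd) : Rd := fun n => a n - b n.
Definition q1mul (a : Rd) : Rd := Rd_add (qmul a) a.

Definition rank_fun (C : triang) := forall X Y : obj C, Hm X Y -> Rd.

Definition is_rank_function (C : triang) (d : period) (rho : rank_fun C) : Prop :=
  (forall X Y (f : Hm X Y), Rd_nonneg d (rho X Y f)) /\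
  (forall X Y (f : Hm X Y), rho _ _ (Sigm f) =1 qmul (rho X Y f)) /\
  (forall X Y Z W (f : Hm X Y) (g : Hm Z W),
      rho _ _ (dsum_mor f g) =1 Rd_add (rho X Y f) (rho Z W g)) /\
  (forall X Y Z (f : Hm X Y) (g : Hm Y Z) (h : Hm Z (Sig X)),
      exact_tri f g h -> Rd_add (rho X Y f) (rho Y Z g) =1 rho Y Y (idm Y)) /\
  (forall X Y Z W (f : Hm X Y) (g : Hm Z W) (h : Hm Z Y),
      forall n, Rd_add (rho X Y f) (rho Z W g) n <= rho _ _ (block_mor f g h) n) /\
  (forall X Y Z (g : Hm Y Z) (f : Hm X Y),
      forall n, rho X Z (cmp g f) n <= rho X Y f n /\ rho X Z (cmp g f) n <= rho Y Z g n).

Definition integral_rank (C : triang) (d : period) (rho : rank_fun C) : Prop :=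
  forall X Y (f : Hm X Y), Zd_nonneg d (rho X Y f).

Definition rho_obj (C : triang) (rho : rank_fun C) (X : obj C) : Rd := rho X X (idm X).
Arguments is_rank_function {C}.
Arguments integral_rank {C}.
Arguments rho_obj {C}.

(** Rotating an exact triangle [X -f-> Y -g-> Z -h-> ΣX] twice gives the
    additivity relations [ρ(f) + ρ(g) = ρ(Y)], [ρ(g) + ρ(h) = ρ(Z)] and
    [ρ(h) + qρ(f) = qρ(X)].  Since [Σc] is [h] up to an isomorphism, the
    connecting morphism satisfies [qρ(c) = ρ(h)], hence [ρ(c) = ρ(X) - ρ(f)],
    and the alternating sum [ρ(X) - ρ(Y) + ρ(Z)] telescopes to
    [ρ(c) + qρ(c)]. *)
From Pilot Require Import Defs.
From mathcomp Require Import all_boot all_order all_algebra.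
From mathcomp Require Import Rstruct.
From mathcomp Require Import lra.
Import Order.TTheory GRing.Theory Num.Theory.
Local Open Scope ring_scope.

Lemma cmp0l (C : preadd) (X Y Z : obj C) (f : Hm X Y) : cmp (0 : Hm Y Z) f = 0.
Proof.
apply: (@addrI _ (cmp (0 : Hm Y Z) f)).
by rewrite -compDl !addr0.
Qed.

Lemma cmpNl (C : preadd) (X Y Z : obj C) (g : Hm Y Z) (f : Hm X Y) :
  cmp (- g) f = - cmp g f.
Proof.
apply: (@addrI _ (cmp g f)).
by rewrite -compDl !subrr cmp0l.
Qed.

Lemma dsum_mor_id (C : Defs.additive) (X Y : obj C) :
  dsum_mor (idm X) (idm Y) = idm (dsum X Y).
Proof. by rewrite /dsum_mor !compm1 inl_prl_inr_prr. Qed.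

Section RankFunction.
Context {C : triang} {rho : rank_fun C}.

Hypothesis rank_Sigm : forall {X Y} (f : Hm X Y), rho _ _ (Sigm f) =1 qmul (rho X Y f).
Hypothesis rank_dsum : forall {X Y Z W} (f : Hm X Y) (g : Hm Z W),
  rho _ _ (dsum_mor f g) =1 Rd_add (rho X Y f) (rho Z W g).
Hypothesis rank_exact : forall {X Y Z} {f : Hm X Y} {g : Hm Y Z} {h : Hm Z (Sig X)},
  exact_tri f g h -> Rd_add (rho X Y f) (rho Y Z g) =1 rho_obj rho Y.
Hypothesis rank_cmp : forall {X Y Z} (g : Hm Y Z) (f : Hm X Y) n,
  rho X Z (cmp g f) n <= rho X Y f n /\ rho X Z (cmp g f) n <= rho Y Z g n.

Lemma rank_obj_dsum X Y :
  rho_obj rho (dsum X Y) =1 Rd_add (rho_obj rho X) (rho_obj rho Y).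
Proof. by move=> n; rewrite /rho_obj -rank_dsum dsum_mor_id. Qed.

Lemma rank_obj_Sig X : rho_obj rho (Sig X) =1 qmul (rho_obj rho X).
Proof. by move=> n; rewrite /rho_obj -Sigm_id rank_Sigm. Qed.

Lemma rank_oppr X Y (f : Hm X Y) : rho X Y (- f) =1 rho X Y f.
Proof.
have negE (g : Hm X Y) : - g = cmp (- idm Y) g by rewrite cmpNl comp1m.
move=> n; apply/le_anti/andP; split.
  by rewrite negE; case: (rank_cmp (- idm Y) f n).
by rewrite -{1}[f]opprK negE; case: (rank_cmp (- idm Y) (- f) n).
Qed.

Lemma rank_cmp_iso X Y Z (h : Hm Y Z) (u : Hm X Y) :
  is_iso u -> rho X Z (cmp h u) =1 rho Y Z h.
Proof.
move=> [v [_ uv]] n; apply/le_anti/andP; split; first by case: (rank_cmp h u n).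
have hE : h = cmp (cmp h u) v by rewrite -Defs.compA uv compm1.
by rewrite {1}hE; case: (rank_cmp (cmp h u) v n).
Qed.

Lemma rank_exact_rot2 {X Y Z} {f : Hm X Y} {g : Hm Y Z} {h : Hm Z (Sig X)} :
  exact_tri f g h -> Rd_add (rho Z (Sig X) h) (qmul (rho X Y f)) =1 qmul (rho_obj rho X).
Proof.
move=> T n; have /exact_rot/exact_rot T2 := T.
by rewrite -rank_obj_Sig -(rank_exact T2) /Rd_add rank_oppr rank_Sigm.
Qed.

Section ConnectingMorphism.
Context {X Y Z W : obj C} {f : Hm X Y} {g : Hm Y Z} {h : Hm Z (Sig X)}.
Context {u : Hm (Sig W) Z} {c : Hm W X}.
Hypotheses (T : exact_tri f g h) (iso_u : is_iso u) (Sigm_c : Sigm c = cmp h u).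

Lemma rank_connecting_Sig : qmul (rho W X c) =1 rho Z (Sig X) h.
Proof. by move=> n; rewrite -rank_Sigm Sigm_c rank_cmp_iso. Qed.

Lemma rank_connecting : rho W X c =1 Rd_sub (rho_obj rho X) (rho X Y f).
Proof.
move=> n; have := rank_exact_rot2 T (n + 1).
by rewrite /Rd_add /Rd_sub -rank_connecting_Sig /qmul addrK => <-; rewrite addrK.
Qed.

Lemma rank_exact_alternating :
  Rd_add (Rd_sub (rho_obj rho X) (rho_obj rho Y)) (rho_obj rho Z) =1 q1mul (rho W X c).
Proof.
have /exact_rot T1 := T.
move=> n; rewrite /q1mul /Rd_add /Rd_sub rank_connecting_Sig rank_connecting /Rd_sub.
rewrite -(rank_exact T) -(rank_exact T1) /Rd_add; lra.
Qed.

End ConnectingMorphism.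
End RankFunction.

Theorem proposition2p8 (C : triang) (d : period) (rho : rank_fun C) :
  valid_period d -> is_rank_function d rho ->
  (forall X Y : obj C,
      rho_obj rho (dsum X Y) =1 Rd_add (rho_obj rho X) (rho_obj rho Y)) /\
  (forall X : obj C, rho_obj rho (Sig X) =1 qmul (rho_obj rho X)) /\
  (forall (X Y Z : obj C) (f : Hm X Y) (g : Hm Y Z) (h : Hm Z (Sig X)),
      exact_tri f g h ->
      (exists phi : Rd, Rd_nonneg d phi /\
         Rd_add (Rd_sub (rho_obj rho X) (rho_obj rho Y)) (rho_obj rho Z) =1 q1mul phi) /\
      (* the connecting morphism c : Σ^{-1} Z -> X, for any choice of
         desuspension u : Σ W ≅ Z of Z, i.e. Σ c = h ∘ u *)
      (forall (W : obj C) (u : Hm (Sig W) Z) (c : Hm W X),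
         is_iso u -> Sigm c = cmp h u ->
         Rd_add (Rd_sub (rho_obj rho X) (rho_obj rho Y)) (rho_obj rho Z)
           =1 q1mul (rho W X c))) /\
  (integral_rank d rho -> forall X : obj C, Zd_nonneg d (rho_obj rho X)).
Proof.
move=> _ [rank_nonneg [rank_Sigm [rank_dsum [rank_exact [_ rank_cmp]]]]].
split; first exact: rank_obj_dsum rank_dsum.
split; first exact: rank_obj_Sig rank_Sigm.
split; last by move=> rank_int X; apply: rank_int.
move=> X Y Z f g h T.
have alternating W (u : Hm (Sig W) Z) (c : Hm W X) :=
  rank_exact_alternating rank_Sigm rank_exact rank_cmp T (u := u) (c := c).
split; last exact alternating.
have [W [u iso_u]] := Sig_esurj C Z.
have [c Sigm_c] := Sig_full C W X (cmp h u).
exists (rho W X c); split; first exact: rank_nonneg.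
exact (alternating W u c iso_u Sigm_c).
Qed.
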